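(* Let $p$ be a prime, $\alpha\ge1$ and $\beta\ge0$. For every function $f:\mathbb{Z}_{p^\alpha}\to\mathbb{Z}$, $p^\beta$ divides $\Delta^{\beta(p^\alpha-1)+1}f(x)$ for all $x\in\mathbb{Z}_{p^\alpha}$.
   Context: For a function $f$ on $\mathbb{Z}_q=\mathbb{Z}/q\mathbb{Z}$ with values in $\mathbb{Z}$, $\Delta f(x):=f(x+1)-f(x)$ and $\Delta^k$ denotes the $k$-fold iterate. *)

From mathcomp Require Import all_boot all_order all_algebra.
Set Implicit Arguments. Unset Strict Implicit. Unset Printing Implicit Defensive.
Import GRing.Theory Num.Theory.
Local Open Scope ring_scope.

Definition Delta (q : nat) (f : 'Z_q -> int) : 'Z_q -> int :=
  fun x => f (x + 1) - f x.

Definition DeltaN (q : nat) (k : nat) (f : 'Z_q -> int) : 'Z_q -> int :=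
  iter k (@Delta q) f.

From mathcomp Require Import all_boot all_order all_algebra.
Set Implicit Arguments. Unset Strict Implicit. Unset Printing Implicit Defensive.
Import GRing.Theory Num.Theory.
Local Open Scope ring_scope.

(* Write q = p ^ a.  By the binomial formula,
   Delta^n g x = sum_j c_j g (x + j) where the c_j are the coefficients of
   ('X - 1)^n.  In characteristic p we have ('X - 1)^(q-1) = 1 + 'X + ... +
   'X^(q-1), because multiplying by 'X - 1 gives ('X - 1)^q = 'X^q - 1.
   Hence Delta^(q-1) g = S + p * h, where S y = sum_(j < q) g (y + j) is a
   sum over a full period of Z_q, so S is invariant under y |-> y + 1 and is
   killed by Delta.  Consequently Delta^(n+1+(q-1)) g = p * Delta^(n+1) h,
   and the theorem follows by induction on b, applying this step with
   n = b * (q - 1). *)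

Lemma sum_nat_shift (F : nat -> int) m : F m = F 0 ->
  \sum_(0 <= j < m) F j.+1 = \sum_(0 <= j < m) F j.
Proof.
case: m => [|m] Fm; first by rewrite !big_geq.
by rewrite big_nat_recr // [RHS]big_nat_recl // Fm addrC.
Qed.

Section DeltaNTheory.

Variable q : nat.
Implicit Types (g u h : 'Z_q -> int) (x y : 'Z_q).

Lemma DeltaNS n g x : DeltaN n.+1 g x = DeltaN n g (x + 1) - DeltaN n g x.
Proof. by []. Qed.

Lemma DeltaND m n g : DeltaN (m + n) g = DeltaN m (DeltaN n g).
Proof. by rewrite /DeltaN iterD. Qed.

Lemma eq_DeltaN n u h : (forall y, u y = h y) -> forall x, DeltaN n u x = DeltaN n h x.
Proof.
move=> uh; elim: n => [|n IHn] x; first exact: uh.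
by rewrite !DeltaNS !IHn.
Qed.

Lemma DeltaN_lin n u h (c : int) x :
  DeltaN n (fun y => u y + c * h y) x = DeltaN n u x + c * DeltaN n h x.
Proof.
elim: n x => [|n IHn] x //.
by rewrite !DeltaNS !IHn mulrBr opprD addrACA.
Qed.

Lemma DeltaN_shift_invariant n u x :
  (forall y, u (y + 1) = u y) -> DeltaN n.+1 u x = 0.
Proof.
move=> u_inv; rewrite -addn1 DeltaND.
rewrite (@eq_DeltaN n _ (fun _ => 0)); last by move=> y; rewrite /= /Delta u_inv subrr.
by elim: n x => [|n IHn] x //; rewrite DeltaNS !IHn subrr.
Qed.

Lemma DeltaN_coef n g x :
  DeltaN n g x = \sum_(j < n.+1) (('X - 1) ^+ n : {poly int})`_j * g (x + j%:R).
Proof.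
elim: n x => [|n IHn] x; first by rewrite big_ord1 expr0 coefC mul1r addr0.
rewrite DeltaNS !IHn.
set c := (('X - 1) ^+ n : {poly int}).
have -> : (('X - 1) ^+ n.+1 : {poly int}) = c * 'X - c.
  by rewrite exprSr mulrBr mulr1.
under [RHS]eq_bigr => j _ do rewrite coefB coefMX mulrBl.
rewrite sumrB; congr (_ - _).
  rewrite [RHS]big_ord_recl /= mul0r add0r; apply: eq_bigr => j _.
  by rewrite /bump /= add0n -natr1 addrA addrAC.
have c_top : c`_n.+1 = 0 by rewrite nth_default // /c -polyC1 size_exp_XsubC.
by rewrite [RHS]big_ord_recr /= c_top mul0r addr0.
Qed.

Hypothesis q_gt1 : (1 < q)%N.

Definition window_sum g y : int := \sum_(j < q) g (y + j%:R).

Lemma window_sumS g y : window_sum g (y + 1) = window_sum g y.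
Proof.
rewrite /window_sum -(big_mkord xpredT (fun j => g (y + 1 + j%:R))).
rewrite -(big_mkord xpredT (fun j => g (y + j%:R))).
rewrite -(@sum_nat_shift (fun j => g (y + j%:R))); last by rewrite pchar_Zp.
by apply: eq_bigr => j _; rewrite -natr1 addrA addrAC.
Qed.

End DeltaNTheory.

(* In characteristic p, ('X - 1)^(p^a - 1) = 1 + 'X + ... + 'X^(p^a - 1):
   both sides times 'X - 1 equal 'X^(p^a) - 1 by the Frobenius identity. *)
Lemma XsubC1_exp_pred (R : idomainType) (p a : nat) :
  p \in [pchar R] ->
  (('X - 1) ^+ (p ^ a).-1 : {poly R}) = \sum_(i < p ^ a) 'X^i.
Proof.
move=> pcharR.
have pcharP : p \in [pchar {poly R}] by rewrite (pchar_poly _ p).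
have p_nat : [pchar {poly R}].-nat (p ^ a)%N.
  by rewrite (eq_pnat _ (pcharf_eq pcharP)) pnatX pnat_id // (pcharf_prime pcharR).
have q_gt0 : (0 < p ^ a)%N by rewrite expn_gt0 prime_gt0 // (pcharf_prime pcharR).
have XsubC1_neq0 : ('X - 1 : {poly R}) != 0 by rewrite -polyC1 polyXsubC_eq0.
apply: (mulfI XsubC1_neq0); rewrite -exprS prednK // -subrX1.
by rewrite exprDn_pchar // exprNn_pchar // expr1n.
Qed.

Lemma coef_XsubC1_exp_pred_modp (p a j : nat) : prime p -> (j < p ^ a)%N ->
  (((('X - 1) ^+ (p ^ a).-1 : {poly int})`_j)%:~R : 'F_p) = 1.
Proof.
move=> p_pr j_lt; rewrite -coef_map rmorphXn rmorphB /= map_polyX rmorph1.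
rewrite XsubC1_exp_pred ?pchar_Fp // coef_sum (bigD1 (Ordinal j_lt)) //=.
rewrite coefXn eqxx big1 ?addr0 // => i neq_ij.
by rewrite coefXn; case: eqP => // ij; case/eqP: neq_ij; apply: val_inj.
Qed.

Lemma DeltaN_pred_window_sum (p a : nat) (g : 'Z_(p ^ a) -> int) x :
  prime p -> (p%:Z %| DeltaN (p ^ a).-1 g x - window_sum g x)%Z.
Proof.
move=> p_pr; have q_gt0 : (0 < p ^ a)%N by rewrite expn_gt0 prime_gt0.
rewrite DeltaN_coef /window_sum prednK // (dvdz_pcharf (pchar_Fp p_pr)).
rewrite -sumrB rmorph_sum big1 // => j _.
by rewrite /= intrB intrM coef_XsubC1_exp_pred_modp // mul1r subrr.
Qed.

Lemma DeltaN_step (p a : nat) (g : 'Z_(p ^ a) -> int) :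
  prime p -> (1 <= a)%N ->
  exists h, forall n x, DeltaN (n.+1 + (p ^ a).-1) g x = p%:Z * DeltaN n.+1 h x.
Proof.
move=> p_pr a_gt0.
have q_gt1 : (1 < p ^ a)%N by rewrite -(expn0 p) ltn_exp2l ?prime_gt1.
pose h y := ((DeltaN (p ^ a).-1 g y - window_sum g y) %/ p%:Z)%Z.
have decomp y : DeltaN (p ^ a).-1 g y = window_sum g y + p%:Z * h y.
  by rewrite mulrC divzK ?DeltaN_pred_window_sum // addrC subrK.
exists h => n x; rewrite DeltaND (eq_DeltaN _ decomp) DeltaN_lin.
by rewrite DeltaN_shift_invariant ?add0r // => y; apply: window_sumS.
Qed.

Theorem lemma3p3 (p a b : nat) (hp : prime p) (ha : (1 <= a)%N)
  (f : 'Z_(p ^ a) -> int) (x : 'Z_(p ^ a)) :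
  ((p ^ b)%:Z %| DeltaN (b * (p ^ a - 1) + 1) f x)%Z.
Proof.
elim: b f x => [|b IHb] f x; first by rewrite expn0 dvd1z.
have -> : (b.+1 * (p ^ a - 1) + 1 = (b * (p ^ a - 1)).+1 + (p ^ a).-1)%N.
  by rewrite mulSn -subn1 addn1 addSn addnC.
have [h ->] := DeltaN_step f hp ha.
by rewrite expnS PoszM dvdz_mul // -addn1.
Qed.
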